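(* For all $t\in\mathbb N$ we have $\lvert v_t^\alpha-v_t^\beta\rvert\le 48$.
   Context: Let $\mathsf r(n)$ be the number of (overlapping) occurrences of $\mathtt{11}$ in the binary expansion of $n\in\mathbb N=\{0,1,\dots\}$, and $d(t,n)=\mathsf r(n+t)-\mathsf r(n)$. Let $a_t(k)$, $b_t(k)$ ($k\in\mathbb Z$) be the asymptotic densities (which exist and define probability distributions on $\mathbb Z$) of $\{n:d(t,2n)=k\}$ and $\{n:d(t,2n+1)=k\}$. Let $v_t^\alpha$ and $v_t^\beta$ denote the variances of the distributions $a_t$ and $b_t$ respectively. *)

From Stdlib Require Import Reals ZArith Arith List Lia Lra.
From Coquelicot Require Import Coquelicot.
Open Scope R_scope.

(* r n = number of (overlapping) occurrences of 11 in the binary expansion of n,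
   i.e. the number of positions i with bits i and i+1 of n both equal to 1.
   Since n < 2^n, only positions i < n can contribute. *)
Definition r (n : nat) : nat :=
  length (filter (fun i => andb (Nat.testbit n i) (Nat.testbit n (S i))) (seq 0 n)).

Definition d (t n : nat) : Z := (Z.of_nat (r (n + t)) - Z.of_nat (r n))%Z.

Definition density (P : nat -> bool) : R :=
  real (Lim_seq (fun N => INR (length (filter P (seq 0 N))) / INR N)).

Definition a_dist (t : nat) (k : Z) : R := density (fun n => Z.eqb (d t (2 * n)) k).
Definition b_dist (t : nat) (k : Z) : R := density (fun n => Z.eqb (d t (2 * n + 1)) k).

Definition sumZ (f : Z -> R) : R :=
  Series (fun m => f (Z.of_nat m)) + Series (fun m => f (- Z.of_nat m - 1)%Z).

Definition meanZ (p : Z -> R) : R := sumZ (fun k => IZR k * p k).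
Definition varZ (p : Z -> R) : R := sumZ (fun k => (IZR k - meanZ p) ^ 2 * p k).

Definition v_alpha (t : nat) : R := varZ (a_dist t).
Definition v_beta (t : nat) : R := varZ (b_dist t).

From Stdlib Require Import Reals ZArith List Lia Lra FunctionalExtensionality.
From Coquelicot Require Import Coquelicot.
Open Scope R_scope.

(* Writing o(n) for the parity of n, the digit recursions r(2m) = r(m) and
   r(2m+1) = r(m) + o(m) sort the events {n : d(t,2n) = k} and {n : d(t,2n+1) = k}
   by the parity of n. Hence each of a_2s, b_2s, a_2s+1, b_2s+1 is the average of a
   shifted copy of a_t' and a shifted copy of b_t', with t' = s or s + 1, and the
   densities exist because restricting to even or odd n halves a density.  All these
   distributions have mass 1, and a_t, b_t have means o(t)/2 and -o(t)/2, so
   v_t^alpha - v_t^beta is the difference of the second moments.  Their average A_t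
   satisfies A_2s = A_s + o(s) and A_2s+1 = (A_s + A_s+1)/2 + 3/4, so
   |A_s+1 - A_s| <= 3/2, and the difference of second moments is at most 2.
   The one self-referential case, b_1(k) = (a_1(k) + b_1(k+1))/2, is settled by
   d(1,n) <= 1: b_1 vanishes above 1 and decays geometrically below 0. *)

(** * Binary digits *)

Definition pairs11 (n L : nat) : nat :=
  length (filter (fun i => (Nat.testbit n i && Nat.testbit n (S i))%bool) (seq 0 L)).

Lemma testbit_ge n i : (n <= i)%nat -> Nat.testbit n i = false.
Proof.
  intros Hni. destruct n as [|n]; [apply Nat.bits_0|].
  apply Nat.bits_above_log2. pose proof (Nat.log2_lt_lin (S n)). lia.
Qed.

Lemma pairs11_r n L : (n <= L)%nat -> pairs11 n L = r n.
Proof.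
  intros HnL. unfold pairs11, r.
  replace L with (n + (L - n))%nat by lia.
  rewrite seq_app, filter_app, length_app.
  rewrite (filter_ext_in _ (fun _ => false) (seq (0 + n) (L - n))), filter_false;
    [apply Nat.add_0_r|].
  intros i Hi%in_seq. rewrite testbit_ge by lia. reflexivity.
Qed.

Lemma pairs11_double m L : pairs11 (2 * m) (S L) = pairs11 m L.
Proof.
  unfold pairs11; cbn [seq filter].
  rewrite Nat.testbit_even_0; cbn [andb].
  rewrite <- seq_shift, filter_map_swap, length_map.
  f_equal. apply filter_ext. intro i. now rewrite !Nat.double_bits_succ.
Qed.

Lemma pairs11_double_succ m L :
  pairs11 (2 * m + 1) (S L) = (Nat.b2n (Nat.odd m) + pairs11 m L)%nat.
Proof.
  unfold pairs11; cbn [seq filter].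
  rewrite Nat.testbit_odd_0, Nat.testbit_odd_succ', Nat.bit0_odd; cbn [andb].
  rewrite <- seq_shift, filter_map_swap.
  replace (filter _ (seq 0 L))
    with (filter (fun i => (Nat.testbit m i && Nat.testbit m (S i))%bool) (seq 0 L))
    by (apply filter_ext; intro i; now rewrite !Nat.testbit_odd_succ').
  destruct (Nat.odd m); cbn [length Nat.b2n]; now rewrite ?length_map.
Qed.

Lemma r_double m : r (2 * m) = r m.
Proof.
  rewrite <- (pairs11_r (2 * m) (S (2 * m))) by lia.
  rewrite pairs11_double. apply pairs11_r. lia.
Qed.

Lemma r_double_succ m : r (2 * m + 1) = (Nat.b2n (Nat.odd m) + r m)%nat.
Proof.
  rewrite <- (pairs11_r (2 * m + 1) (S (2 * m + 1))) by lia.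
  rewrite pairs11_double_succ, pairs11_r by lia. reflexivity.
Qed.

Definition oddZ (n : nat) : Z := Z.b2z (Nat.odd n).

Lemma oddZ_cases n : oddZ n = 0%Z \/ oddZ n = 1%Z.
Proof. unfold oddZ. destruct (Nat.odd n); auto. Qed.

Lemma oddZ_double m : oddZ (2 * m) = 0%Z.
Proof. unfold oddZ. now rewrite Nat.odd_even. Qed.

Lemma oddZ_double_succ m : oddZ (2 * m + 1) = 1%Z.
Proof. unfold oddZ. now rewrite Nat.odd_odd. Qed.

Lemma oddZ_succ n : oddZ (n + 1) = (1 - oddZ n)%Z.
Proof.
  unfold oddZ. rewrite Nat.add_1_r, Nat.odd_succ, <- Nat.negb_odd. now destruct (Nat.odd n).
Qed.

Lemma oddZ_double_add m n : oddZ (2 * m + n) = oddZ n.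
Proof. unfold oddZ. now rewrite Nat.add_comm, Nat.odd_add_mul_2. Qed.

Lemma oddZ_double_succ_add m n : oddZ (2 * m + 1 + n) = (1 - oddZ n)%Z.
Proof.
  replace (2 * m + 1 + n)%nat with (2 * m + n + 1)%nat by lia.
  now rewrite oddZ_succ, oddZ_double_add.
Qed.

Lemma r_double_succ_Z m : Z.of_nat (r (2 * m + 1)) = (oddZ m + Z.of_nat (r m))%Z.
Proof. rewrite r_double_succ, Nat2Z.inj_add. unfold oddZ. now destruct (Nat.odd m). Qed.

Lemma d_even_even s n : d (2 * s) (2 * n) = d s n.
Proof. unfold d. rewrite <- Nat.mul_add_distr_l, !r_double. reflexivity. Qed.

Lemma d_even_odd s n : d (2 * s) (2 * n + 1) = (d s n + oddZ (n + s) - oddZ n)%Z.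
Proof.
  unfold d. replace (2 * n + 1 + 2 * s)%nat with (2 * (n + s) + 1)%nat by lia.
  rewrite !r_double_succ_Z. lia.
Qed.

Lemma d_odd_even s n : d (2 * s + 1) (2 * n) = (d s n + oddZ (n + s))%Z.
Proof.
  unfold d. replace (2 * n + (2 * s + 1))%nat with (2 * (n + s) + 1)%nat by lia.
  rewrite r_double_succ_Z, r_double. lia.
Qed.

Lemma d_odd_odd s n : d (2 * s + 1) (2 * n + 1) = (d (s + 1) n - oddZ n)%Z.
Proof.
  unfold d. replace (2 * n + 1 + (2 * s + 1))%nat with (2 * (n + (s + 1)))%nat by lia.
  rewrite r_double_succ_Z, r_double. lia.
Qed.

Lemma d_zero n : d 0 n = 0%Z.
Proof. unfold d. rewrite Nat.add_0_r. lia. Qed.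

Lemma d_one_le n : (d 1 n <= 1)%Z.
Proof.
  induction n as [n IH] using (well_founded_induction lt_wf).
  destruct (Nat.Even_or_Odd n) as [[m ->]|[m ->]].
  - pose proof (d_odd_even 0 m) as E.
    rewrite Nat.mul_0_r, Nat.add_0_l, d_zero, Nat.add_0_r in E.
    destruct (oddZ_cases m); lia.
  - destruct m as [|m]; [cbv; discriminate|].
    pose proof (d_odd_odd 0 (S m)) as E. rewrite Nat.mul_0_r, !Nat.add_0_l in E.
    specialize (IH (S m) ltac:(lia)). destruct (oddZ_cases (S m)); lia.
Qed.

Definition a_event (t : nat) (k : Z) (n : nat) : bool := Z.eqb (d t (2 * n)) k.
Definition b_event (t : nat) (k : Z) (n : nat) : bool := Z.eqb (d t (2 * n + 1)) k.

Definition interleaves (R P Q : nat -> bool) : Prop :=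
  (forall m, R (2 * m)%nat = P m) /\ (forall m, R (2 * m + 1)%nat = Q m).

Lemma Z_eqb_shift x y k l : (x - y = k - l)%Z -> Z.eqb x k = Z.eqb y l.
Proof.
  intros E. destruct (Z.eqb_spec x k), (Z.eqb_spec y l); try reflexivity; exfalso; lia.
Qed.

Lemma a_event_even s k : interleaves (a_event (2 * s) k) (a_event s k) (b_event s k).
Proof. split; intro m; unfold a_event, b_event; now rewrite d_even_even. Qed.

Lemma b_event_even s k :
  interleaves (b_event (2 * s) k) (a_event s (k - oddZ s)) (b_event s (k + oddZ s)).
Proof.
  split; intro m; apply Z_eqb_shift; rewrite d_even_odd.
  - rewrite oddZ_double_add, oddZ_double. lia.
  - rewrite oddZ_double_succ_add, oddZ_double_succ. lia.
Qed.

Lemma a_event_odd s k :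
  interleaves (a_event (2 * s + 1) k) (a_event s (k - oddZ s)) (b_event s (k - (1 - oddZ s))).
Proof.
  split; intro m; apply Z_eqb_shift; rewrite d_odd_even.
  - rewrite oddZ_double_add. lia.
  - rewrite oddZ_double_succ_add. lia.
Qed.

Lemma b_event_odd s k :
  interleaves (b_event (2 * s + 1) k) (a_event (s + 1) k) (b_event (s + 1) (k + 1)).
Proof.
  split; intro m; apply Z_eqb_shift; rewrite d_odd_odd.
  - rewrite oddZ_double. lia.
  - rewrite oddZ_double_succ. lia.
Qed.

(** * Densities *)

Definition count (P : nat -> bool) (N : nat) : nat := length (filter P (seq 0 N)).

Definition has_density (P : nat -> bool) (l : R) : Prop :=
  is_lim_seq (fun N => INR (count P N) / INR N) l.

Lemma has_density_unique P l : has_density P l -> density P = l.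
Proof.
  intros H. change (real (Lim_seq (fun N => INR (count P N) / INR N)) = l).
  now rewrite (is_lim_seq_unique _ _ H).
Qed.

Lemma count_S P N : count P (S N) = (count P N + Nat.b2n (P N))%nat.
Proof. unfold count. rewrite seq_S, filter_app, length_app. cbn. now destruct (P N). Qed.

Lemma count_interleave R P Q : interleaves R P Q ->
  forall N, count R N = (count P (Nat.div2 (S N)) + count Q (Nat.div2 N))%nat.
Proof.
  intros [HP HQ].
  assert (Hdouble : forall M, count R (2 * M) = (count P M + count Q M)%nat
                         /\ count R (2 * M + 1) = (count P (S M) + count Q M)%nat).
  { induction M as [|M [_ IHodd]].
    - split; [reflexivity|]. rewrite Nat.add_1_r, !count_S, HP, Nat.mul_0_r.
      cbn [count seq filter length]. lia.
    - assert (Heven : count R (2 * S M) = (count P (S M) + count Q (S M))%nat).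
      { replace (2 * S M)%nat with (S (2 * M + 1)) by lia.
        rewrite count_S, IHodd, HQ, (count_S Q). lia. }
      split; [exact Heven|].
      rewrite Nat.add_1_r, count_S, Heven, HP, (count_S P (S M)). lia. }
  intros N. destruct (Nat.Even_or_Odd N) as [[M ->]|[M ->]].
  - rewrite Nat.div2_succ_double, Nat.div2_double. apply Hdouble.
  - replace (S (2 * M + 1)) with (2 * S M)%nat by lia.
    rewrite Nat.div2_double, Nat.add_1_r, Nat.div2_succ_double, <- Nat.add_1_r. apply Hdouble.
Qed.

Lemma is_lim_seq_inv_INR : is_lim_seq (fun N => / INR N) 0.
Proof. apply (is_lim_seq_inv _ _ is_lim_seq_INR). discriminate. Qed.

Lemma is_lim_seq_half (h : nat -> nat) : (forall N, N <= 2 * h N + 1 <= N + 2)%nat ->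
  is_lim_seq (fun N => INR (h N) / INR N) (1 / 2).
Proof.
  intros Hh.
  apply is_lim_seq_le_le_loc with (u := fun N => 1 / 2 - / INR N) (w := fun N => 1 / 2 + / INR N).
  - exists 1%nat. intros N HN.
    assert (Hbounds : INR N <= 2 * INR (h N) + 1 <= INR N + 2).
    { destruct (Hh N) as [Hlo%le_INR Hhi%le_INR].
      rewrite !plus_INR, mult_INR in Hlo; rewrite !plus_INR, mult_INR in Hhi.
      simpl (INR 1) in *; simpl (INR 2) in *. lra. }
    apply le_INR in HN. simpl (INR 1) in HN.
    assert (Hinv : 0 < / INR N) by (apply Rinv_0_lt_compat; lra).
    replace (INR (h N) / INR N) with (1 / 2 + (INR (h N) - INR N / 2) * / INR N) by (field; lra).
    split; nra.
  - replace (1 / 2) with (1 / 2 - 0) at 1 by ring.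
    apply is_lim_seq_minus'; [apply is_lim_seq_const | apply is_lim_seq_inv_INR].
  - replace (1 / 2) with (1 / 2 + 0) at 1 by ring.
    apply is_lim_seq_plus'; [apply is_lim_seq_const | apply is_lim_seq_inv_INR].
Qed.

Lemma has_density_half P l (h : nat -> nat) : (forall N, N <= 2 * h N + 1 <= N + 2)%nat ->
  has_density P l -> is_lim_seq (fun N => INR (count P (h N)) / INR N) (l / 2).
Proof.
  intros Hh HP.
  assert (Hh_lim : filterlim h eventually eventually).
  { intros A [M HA]. exists (2 * M + 1)%nat. intros n Hn. apply HA. specialize (Hh n). lia. }
  pose proof (is_lim_seq_mult' _ _ _ _ (is_lim_seq_subseq _ _ _ Hh_lim HP) (is_lim_seq_half h Hh))
    as Hprod.
  replace (l / 2) with (l * (1 / 2)) by field.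
  apply is_lim_seq_ext_loc with (2 := Hprod).
  exists 2%nat. intros N HN. specialize (Hh N).
  assert (0 < INR (h N)) by (apply lt_0_INR; lia).
  assert (0 < INR N) by (apply lt_0_INR; lia).
  field. lra.
Qed.

Lemma has_density_interleave R P Q lP lQ : interleaves R P Q ->
  has_density P lP -> has_density Q lQ -> has_density R ((lP + lQ) / 2).
Proof.
  intros HR HP HQ. unfold has_density.
  replace ((lP + lQ) / 2) with (lP / 2 + lQ / 2) by field.
  apply is_lim_seq_ext
    with (fun N => INR (count P (Nat.div2 (S N))) / INR N + INR (count Q (Nat.div2 N)) / INR N).
  { intros N. rewrite (count_interleave _ _ _ HR), plus_INR. unfold Rdiv. ring. }
  apply is_lim_seq_plus'; apply has_density_half; trivial; intros N.
  - pose proof (Nat.div2_odd (S N)). destruct (Nat.odd (S N)); cbn in *; lia.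
  - pose proof (Nat.div2_odd N). destruct (Nat.odd N); cbn in *; lia.
Qed.

Lemma has_density_const P (b : bool) : (forall n, P n = b) -> has_density P (if b then 1 else 0).
Proof.
  intros HP.
  assert (Hcount : forall N, count P N = (Nat.b2n b * N)%nat).
  { induction N as [|N IH]; [now rewrite Nat.mul_0_r|].
    rewrite count_S, IH, HP. destruct b; cbn; lia. }
  apply is_lim_seq_ext_loc with (fun _ => if b then 1 else 0); [|apply is_lim_seq_const].
  exists 1%nat. intros N HN. rewrite Hcount.
  assert (0 < INR N) by (apply lt_0_INR; lia).
  destruct b; cbn [Nat.b2n]; rewrite ?Nat.mul_1_l, ?Nat.mul_0_l; cbn [INR]; field; lra.
Qed.

Lemma ex_density_interleave R P Q : interleaves R P Q ->
  (exists l, has_density P l) -> (exists l, has_density Q l) -> exists l, has_density R l.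
Proof. intros HR [lP HP] [lQ HQ]. eexists. exact (has_density_interleave _ _ _ _ _ HR HP HQ). Qed.

Lemma b_event_one_ge k n : (2 <= k)%Z -> b_event 1 k n = false.
Proof. intros Hk. apply Z.eqb_neq. pose proof (d_one_le (2 * n + 1)). lia. Qed.

Lemma events_have_density t k :
  (exists l, has_density (a_event t k) l) /\ (exists l, has_density (b_event t k) l).
Proof.
  revert k. induction t as [t IH] using (well_founded_induction lt_wf). intros k.
  destruct (Nat.Even_or_Odd t) as [[[|s] ->]|[s ->]].
  - split; exists (if (0 =? k)%Z then 1 else 0); apply has_density_const;
      intro n; unfold a_event, b_event; now rewrite Nat.mul_0_r, d_zero.
  - split; [apply (ex_density_interleave _ _ _ (a_event_even (S s) k))
           |apply (ex_density_interleave _ _ _ (b_event_even (S s) k))]; apply IH; lia.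
  - assert (Ha : forall k', exists l, has_density (a_event (2 * s + 1) k') l).
    { intros k'. apply (ex_density_interleave _ _ _ (a_event_odd s k')); apply IH; lia. }
    split; [apply Ha|].
    destruct s as [|s].
    2: { apply (ex_density_interleave _ _ _ (b_event_odd (S s) k)); apply IH; lia. }
    (* b_1 is built from b_1 itself; descend in k from the empty events k >= 2. *)
    assert (Hb1 : forall j k, (2 - k <= Z.of_nat j)%Z -> exists l, has_density (b_event 1 k) l).
    { induction j as [|j IHj]; intros k' Hk'.
      - exists 0. apply (has_density_const _ false). intro n. apply b_event_one_ge. lia.
      - apply (ex_density_interleave _ _ _ (b_event_odd 0 k')); [apply Ha|apply IHj; lia]. }
    apply (Hb1 (Z.to_nat (2 - k))). lia.
Qed.

Lemma has_density_a_dist t k : has_density (a_event t k) (a_dist t k).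
Proof.
  destruct (proj1 (events_have_density t k)) as [l Hl].
  unfold a_dist. fold (a_event t k). now rewrite (has_density_unique _ _ Hl).
Qed.

Lemma has_density_b_dist t k : has_density (b_event t k) (b_dist t k).
Proof.
  destruct (proj2 (events_have_density t k)) as [l Hl].
  unfold b_dist. fold (b_event t k). now rewrite (has_density_unique _ _ Hl).
Qed.

Definition mix2 (e1 e2 : Z) (p q : Z -> R) (k : Z) : R := (p (k - e1)%Z + q (k - e2)%Z) / 2.

Lemma a_dist_even s : a_dist (2 * s) = mix2 0 0 (a_dist s) (b_dist s).
Proof.
  extensionality k. unfold mix2. rewrite !Z.sub_0_r.
  apply has_density_unique, (has_density_interleave _ _ _ _ _ (a_event_even s k));
    [apply has_density_a_dist | apply has_density_b_dist].
Qed.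

Lemma b_dist_even s : b_dist (2 * s) = mix2 (oddZ s) (- oddZ s) (a_dist s) (b_dist s).
Proof.
  extensionality k. unfold mix2. rewrite Z.sub_opp_r.
  apply has_density_unique, (has_density_interleave _ _ _ _ _ (b_event_even s k));
    [apply has_density_a_dist | apply has_density_b_dist].
Qed.

Lemma a_dist_odd s : a_dist (2 * s + 1) = mix2 (oddZ s) (1 - oddZ s) (a_dist s) (b_dist s).
Proof.
  extensionality k.
  apply has_density_unique, (has_density_interleave _ _ _ _ _ (a_event_odd s k));
    [apply has_density_a_dist | apply has_density_b_dist].
Qed.

Lemma b_dist_odd s : b_dist (2 * s + 1) = mix2 0 (-1) (a_dist (s + 1)) (b_dist (s + 1)).
Proof.
  extensionality k. unfold mix2. rewrite Z.sub_0_r. replace (k - -1)%Z with (k + 1)%Z by ring.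
  apply has_density_unique, (has_density_interleave _ _ _ _ _ (b_event_odd s k));
    [apply has_density_a_dist | apply has_density_b_dist].
Qed.

Definition dirac0 (k : Z) : R := if (0 =? k)%Z then 1 else 0.

Lemma a_dist_zero : a_dist 0 = dirac0.
Proof.
  extensionality k. apply has_density_unique, has_density_const.
  intro n. now rewrite d_zero.
Qed.

Lemma b_dist_zero : b_dist 0 = dirac0.
Proof.
  extensionality k. apply has_density_unique, has_density_const.
  intro n. now rewrite d_zero.
Qed.

Lemma b_dist_one_ge k : (2 <= k)%Z -> b_dist 1 k = 0.
Proof.
  intros Hk. apply has_density_unique, (has_density_const _ false).
  intro n. now apply b_event_one_ge.
Qed.

Lemma a_dist_one : a_dist 1 = mix2 0 1 dirac0 dirac0.
Proof. pose proof (a_dist_odd 0) as H. rewrite a_dist_zero, b_dist_zero in H. exact H. Qed.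

Lemma b_dist_one : b_dist 1 = mix2 0 (-1) (a_dist 1) (b_dist 1).
Proof. exact (b_dist_odd 0). Qed.

Lemma b_dist_one_neg m : b_dist 1 (- Z.of_nat m - 1) = b_dist 1 0 * (1 / 2) ^ (m + 1).
Proof.
  assert (Hrec : forall k, (k < 0)%Z -> b_dist 1 k = b_dist 1 (k + 1) / 2).
  { intros k Hk. rewrite (equal_f b_dist_one k), a_dist_one. unfold mix2, dirac0.
    rewrite !(proj2 (Z.eqb_neq _ _)) by lia. replace (k - -1)%Z with (k + 1)%Z by ring. field. }
  induction m as [|m IH].
  - rewrite Hrec by lia. cbn. field.
  - rewrite Hrec by lia. replace (- Z.of_nat (S m) - 1 + 1)%Z with (- Z.of_nat m - 1)%Z by lia.
    rewrite IH, !Nat.add_1_r. cbn [pow]. field.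
Qed.

(** * Sums over Z and moments *)

Definition is_sumZ (f : Z -> R) (s : R) : Prop :=
  exists s1 s2 : R, is_series (fun m => f (Z.of_nat m)) s1
    /\ is_series (fun m => f (- Z.of_nat m - 1)%Z) s2 /\ s = s1 + s2.

Lemma is_sumZ_unique f s : is_sumZ f s -> sumZ f = s.
Proof.
  intros (s1 & s2 & H1 & H2 & ->). unfold sumZ.
  now rewrite (is_series_unique _ _ H1), (is_series_unique _ _ H2).
Qed.

Lemma is_sumZ_ext f g s : (forall k, f k = g k) -> is_sumZ f s -> is_sumZ g s.
Proof.
  intros Hfg (s1 & s2 & H1 & H2 & ->). exists s1, s2.
  split; [|split];
    [eapply is_series_ext; [|exact H1] | eapply is_series_ext; [|exact H2] | reflexivity];
    intro m; apply Hfg.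
Qed.

Lemma is_sumZ_plus f g s t : is_sumZ f s -> is_sumZ g t -> is_sumZ (fun k => f k + g k) (s + t).
Proof.
  intros (s1 & s2 & Hf1 & Hf2 & ->) (t1 & t2 & Hg1 & Hg2 & ->).
  exists (s1 + t1), (s2 + t2).
  split; [|split];
    [apply (is_series_plus _ _ _ _ Hf1 Hg1) | apply (is_series_plus _ _ _ _ Hf2 Hg2) | ring].
Qed.

Lemma is_sumZ_scal c f s : is_sumZ f s -> is_sumZ (fun k => c * f k) (c * s).
Proof.
  intros (s1 & s2 & H1 & H2 & ->). exists (c * s1), (c * s2).
  split; [|split]; [apply (is_series_scal_l c _ _ H1) | apply (is_series_scal_l c _ _ H2) | ring].
Qed.

Lemma is_sumZ_reflect f s : is_sumZ f s -> is_sumZ (fun k => f (- k - 1)%Z) s.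
Proof.
  intros (s1 & s2 & H1 & H2 & ->). exists s2, s1.
  split; [|split]; [exact H2 | | ring].
  eapply is_series_ext; [|exact H1]. intro m. cbv beta. f_equal. lia.
Qed.

Lemma is_sumZ_shift_succ f s : is_sumZ f s -> is_sumZ (fun k => f (k + 1)%Z) s.
Proof.
  intros (s1 & s2 & H1 & H2 & ->). exists (s1 - f 0%Z), (s2 + f 0%Z).
  split; [|split]; [| |ring].
  - apply (is_series_ext (fun m => f (Z.of_nat (S m)))); [intro m; f_equal; lia|].
    apply (is_series_incr_1 (fun m => f (Z.of_nat m))).
    change (is_series (fun m => f (Z.of_nat m)) (s1 - f 0%Z + f 0%Z)).
    now replace (s1 - f 0%Z + f 0%Z) with s1 by ring.
  - apply (is_series_decr_1 (fun m => f (- Z.of_nat m - 1 + 1)%Z)).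
    change (is_series (fun m => f (- Z.of_nat (S m) - 1 + 1)%Z) (s2 + f 0%Z - f 0%Z)).
    replace (s2 + f 0%Z - f 0%Z) with s2 by ring.
    eapply is_series_ext; [|exact H2]. intro m. cbv beta. f_equal. lia.
Qed.

Lemma is_sumZ_shift_pred f s : is_sumZ f s -> is_sumZ (fun k => f (k - 1)%Z) s.
Proof.
  (* Conjugating by the reflection k |-> -k-1 turns the shift by +1 into the shift by -1. *)
  intros H. apply is_sumZ_reflect, is_sumZ_shift_succ, is_sumZ_reflect in H.
  eapply is_sumZ_ext; [|exact H]. intro k. cbv beta. f_equal. lia.
Qed.

Lemma is_sumZ_shift e f s : is_sumZ f s -> is_sumZ (fun k => f (k - e)%Z) s.
Proof.
  intros H. induction e as [|e IH|e IH] using Z.peano_ind.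
  - eapply is_sumZ_ext; [|exact H]. intro k. now rewrite Z.sub_0_r.
  - apply is_sumZ_shift_pred in IH.
    eapply is_sumZ_ext; [|exact IH]. intro k. cbv beta. f_equal. lia.
  - apply is_sumZ_shift_succ in IH.
    eapply is_sumZ_ext; [|exact IH]. intro k. cbv beta. f_equal. lia.
Qed.

Lemma is_series_zero : is_series (fun _ : nat => 0) 0.
Proof.
  assert (H : is_series (fun n => 0 * (1 / 2) ^ n) (0 * / (1 - 1 / 2))).
  { apply (is_series_scal_l 0 (fun n => (1 / 2) ^ n)), is_series_geom. rewrite Rabs_pos_eq; lra. }
  rewrite Rmult_0_l in H. eapply is_series_ext; [|exact H]. intro n. apply Rmult_0_l.
Qed.

Lemma is_sumZ_point f : (forall k, k <> 0%Z -> f k = 0) -> is_sumZ f (f 0%Z).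
Proof.
  intros Hf. exists (f 0%Z), 0. split; [|split]; [| |ring].
  - apply is_series_decr_1.
    change (is_series (fun m => f (Z.of_nat (S m))) (f 0%Z - f 0%Z)).
    replace (f 0%Z - f 0%Z) with 0 by ring.
    eapply is_series_ext; [|exact is_series_zero]. intro m. symmetry. apply Hf. lia.
  - eapply is_series_ext; [|exact is_series_zero]. intro m. symmetry. apply Hf. lia.
Qed.

Definition moments (p : Z -> R) (m0 m1 m2 : R) : Prop :=
  is_sumZ p m0 /\ is_sumZ (fun k => IZR k * p k) m1 /\ is_sumZ (fun k => IZR k ^ 2 * p k) m2.

Definition second_moment (p : Z -> R) : R := sumZ (fun k => IZR k ^ 2 * p k).

Lemma moments_unique p a0 a1 a2 b0 b1 b2 :
  moments p a0 a1 a2 -> moments p b0 b1 b2 -> a0 = b0 /\ a1 = b1 /\ a2 = b2.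
Proof.
  intros (Ha0 & Ha1 & Ha2) (Hb0 & Hb1 & Hb2).
  rewrite <- (is_sumZ_unique _ _ Ha0), <- (is_sumZ_unique _ _ Ha1), <- (is_sumZ_unique _ _ Ha2).
  now rewrite (is_sumZ_unique _ _ Hb0), (is_sumZ_unique _ _ Hb1), (is_sumZ_unique _ _ Hb2).
Qed.

Lemma moments_second_moment p m0 m1 m2 : moments p m0 m1 m2 -> moments p m0 m1 (second_moment p).
Proof. intros H. unfold second_moment. now rewrite (is_sumZ_unique _ _ (proj2 (proj2 H))). Qed.

Lemma moments_shift e p m0 m1 m2 : moments p m0 m1 m2 ->
  moments (fun k => p (k - e)%Z) m0 (m1 + IZR e * m0) (m2 + 2 * IZR e * m1 + IZR e ^ 2 * m0).
Proof.
  intros (H0 & H1 & H2). split; [|split].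
  - now apply is_sumZ_shift.
  - eapply is_sumZ_ext;
      [|apply (is_sumZ_shift e (fun j => IZR j * p j + IZR e * p j)), is_sumZ_plus;
        [exact H1 | now apply is_sumZ_scal]].
    intro k. cbv beta. rewrite minus_IZR. ring.
  - assert (H : is_sumZ (fun j => IZR j ^ 2 * p j + (2 * IZR e * (IZR j * p j) + IZR e ^ 2 * p j))
                  (m2 + (2 * IZR e * m1 + IZR e ^ 2 * m0))).
    { apply is_sumZ_plus; [exact H2|]. apply is_sumZ_plus; now apply is_sumZ_scal. }
    rewrite Rplus_assoc. eapply is_sumZ_ext; [|exact (is_sumZ_shift e _ _ H)].
    intro k. cbv beta. rewrite minus_IZR. ring.
Qed.

Lemma moments_average p q a0 a1 a2 b0 b1 b2 : moments p a0 a1 a2 -> moments q b0 b1 b2 ->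
  moments (fun k => (p k + q k) / 2) ((a0 + b0) / 2) ((a1 + b1) / 2) ((a2 + b2) / 2).
Proof.
  assert (Havg : forall f g s t, is_sumZ f s -> is_sumZ g t ->
            is_sumZ (fun k => (f k + g k) / 2) ((s + t) / 2)).
  { intros f g s t Hf Hg. unfold Rdiv. rewrite Rmult_comm.
    eapply is_sumZ_ext; [|apply is_sumZ_scal, (is_sumZ_plus _ _ _ _ Hf Hg)].
    intro k. cbv beta. ring. }
  intros (Hp0 & Hp1 & Hp2) (Hq0 & Hq1 & Hq2). split; [|split].
  - now apply Havg.
  - eapply is_sumZ_ext; [|exact (Havg _ _ _ _ Hp1 Hq1)]. intro k. cbv beta. field.
  - eapply is_sumZ_ext; [|exact (Havg _ _ _ _ Hp2 Hq2)]. intro k. cbv beta. field.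
Qed.

Lemma moments_mix2 e1 e2 p q a0 a1 a2 b0 b1 b2 : moments p a0 a1 a2 -> moments q b0 b1 b2 ->
  moments (mix2 e1 e2 p q) ((a0 + b0) / 2) ((a1 + IZR e1 * a0 + (b1 + IZR e2 * b0)) / 2)
    ((a2 + 2 * IZR e1 * a1 + IZR e1 ^ 2 * a0 + (b2 + 2 * IZR e2 * b1 + IZR e2 ^ 2 * b0)) / 2).
Proof.
  intros Hp Hq.
  exact (moments_average _ _ _ _ _ _ _ _
           (moments_shift e1 _ _ _ _ Hp) (moments_shift e2 _ _ _ _ Hq)).
Qed.

Lemma moments_mix2_centered e1 e2 p q mu P Q : moments p 1 mu P -> moments q 1 (- mu) Q ->
  moments (mix2 e1 e2 p q) 1 ((IZR e1 + IZR e2) / 2)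
    ((P + Q) / 2 + (IZR e1 - IZR e2) * mu + (IZR e1 ^ 2 + IZR e2 ^ 2) / 2).
Proof.
  intros Hp Hq. pose proof (moments_mix2 e1 e2 _ _ _ _ _ _ _ _ Hp Hq) as H.
  replace ((1 + 1) / 2) with 1 in H by field.
  replace ((mu + IZR e1 * 1 + (- mu + IZR e2 * 1)) / 2) with ((IZR e1 + IZR e2) / 2) in H by field.
  replace ((P + 2 * IZR e1 * mu + IZR e1 ^ 2 * 1 + (Q + 2 * IZR e2 * - mu + IZR e2 ^ 2 * 1)) / 2)
    with ((P + Q) / 2 + (IZR e1 - IZR e2) * mu + (IZR e1 ^ 2 + IZR e2 ^ 2) / 2) in H by field.
  exact H.
Qed.

Lemma varZ_moments p mu m2 : moments p 1 mu m2 -> varZ p = m2 - mu ^ 2.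
Proof.
  intros (H0 & H1 & H2). unfold varZ, meanZ. rewrite (is_sumZ_unique _ _ H1).
  apply is_sumZ_unique.
  apply (is_sumZ_ext (fun k => IZR k ^ 2 * p k + (-2 * mu * (IZR k * p k) + mu ^ 2 * p k))).
  { intro k. ring. }
  replace (m2 - mu ^ 2) with (m2 + (-2 * mu * mu + mu ^ 2 * 1)) by ring.
  apply is_sumZ_plus; [exact H2|]. apply is_sumZ_plus; now apply is_sumZ_scal.
Qed.

Lemma moments_dirac0 : moments dirac0 1 0 0.
Proof.
  assert (Hpoint : forall g : Z -> R, is_sumZ (fun k => g k * dirac0 k) (g 0%Z)).
  { intros g. replace (g 0%Z) with (g 0%Z * dirac0 0%Z) by (cbn; ring).
    apply is_sumZ_point. intros k Hk. unfold dirac0. rewrite (proj2 (Z.eqb_neq 0 k)) by lia. ring. }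
  split; [|split].
  - eapply is_sumZ_ext; [|exact (Hpoint (fun _ => 1))]. intro k. cbv beta. ring.
  - exact (Hpoint IZR).
  - pose proof (Hpoint (fun k => IZR k ^ 2)) as H. cbv beta in H.
    now replace (IZR 0 ^ 2) with 0 in H by ring.
Qed.

Lemma binomial_three_halves m : 1 + INR m / 2 + INR m * (INR m - 1) / 8 <= (3 / 2) ^ m.
Proof.
  induction m as [|m IH]; [cbn; lra|].
  rewrite S_INR. cbn [pow].
  assert (Hm : INR m = 0 \/ 1 <= INR m)
    by (destruct m; [now left | right; apply (le_INR 1); lia]).
  nra.
Qed.

Lemma square_le_three_halves_pow m : (INR m + 1) ^ 2 <= 16 * (3 / 2) ^ m.
Proof. pose proof (binomial_three_halves m). pose proof (pos_INR m). nra. Qed.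

Lemma ex_series_quadratic_geom c (u : nat -> R) :
  (forall m, Rabs (u m) <= c * (INR m + 1) ^ 2 * (1 / 2) ^ m) -> ex_series u.
Proof.
  intros Hu.
  assert (Hc : 0 <= c) by (specialize (Hu 0%nat); pose proof (Rabs_pos (u 0%nat)); cbn in Hu; lra).
  apply (ex_series_le u (fun m => 16 * c * (3 / 4) ^ m)).
  - intro m. change (norm (u m)) with (Rabs (u m)). eapply Rle_trans; [apply Hu|].
    replace (3 / 4) with (1 / 2 * (3 / 2)) by field. rewrite Rpow_mult_distr.
    pose proof (Rmult_le_compat_l c _ _ Hc (square_le_three_halves_pow m)).
    pose proof (pow_lt (1 / 2) m ltac:(lra)). nra.
  - apply (ex_series_scal_l (16 * c) (fun m => (3 / 4) ^ m)), ex_series_geom.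
    rewrite Rabs_pos_eq; lra.
Qed.

Lemma b_dist_one_has_moments : exists m0 m1 m2, moments (b_dist 1) m0 m1 m2.
Proof.
  assert (Hsum : forall j, (j <= 2)%nat -> exists s, is_sumZ (fun k => IZR k ^ j * b_dist 1 k) s).
  { intros j Hj.
    assert (Hpos : ex_series (fun m => IZR (Z.of_nat m) ^ j * b_dist 1 (Z.of_nat m))).
    { apply (ex_series_incr_n _ 2). exists 0.
      eapply is_series_ext; [|exact is_series_zero]. intro m.
      rewrite b_dist_one_ge by lia. symmetry. apply Rmult_0_r. }
    assert (Hneg : ex_series (fun m => IZR (- Z.of_nat m - 1) ^ j * b_dist 1 (- Z.of_nat m - 1))).
    { apply (ex_series_quadratic_geom (Rabs (b_dist 1 0))). intro m.
      rewrite b_dist_one_neg, Rabs_mult, <- RPow_abs, Rabs_mult, pow_add.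
      replace (Rabs (IZR (- Z.of_nat m - 1))) with (INR m + 1)
        by (rewrite minus_IZR, opp_IZR, <- INR_IZR_INZ, Rabs_left1; pose proof (pos_INR m); lra).
      rewrite pow_1, (Rabs_pos_eq ((1 / 2) ^ m * (1 / 2))) by (pose proof (pow_le (1 / 2) m); lra).
      assert (Hpow : (INR m + 1) ^ j <= (INR m + 1) ^ 2)
        by (apply Rle_pow; [pose proof (pos_INR m); lra | exact Hj]).
      assert (0 <= Rabs (b_dist 1 0) * (1 / 2) ^ m)
        by (apply Rmult_le_pos; [apply Rabs_pos | apply pow_le; lra]).
      pose proof (pow_le (INR m + 1) j ltac:(pose proof (pos_INR m); lra)).
      nra. }
    destruct Hpos as [s1 H1], Hneg as [s2 H2]. exists (s1 + s2), s1, s2. auto. }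
  destruct (Hsum 0%nat) as [m0 H0]; [lia|].
  destruct (Hsum 1%nat) as [m1 H1]; [lia|].
  destruct (Hsum 2%nat) as [m2 H2]; [lia|].
  exists m0, m1, m2. split; [|split]; [| |exact H2]; (eapply is_sumZ_ext; [|eassumption]);
    intro k; cbn [pow]; ring.
Qed.

(** * Moments of a_t and b_t *)

Definition parity_mean (t : nat) : R := IZR (oddZ t) / 2.

Definition dist_moments (t : nat) : Prop :=
  moments (a_dist t) 1 (parity_mean t) (second_moment (a_dist t))
  /\ moments (b_dist t) 1 (- parity_mean t) (second_moment (b_dist t)).

Lemma moments_mix2_dist e1 e2 t : dist_moments t ->
  moments (mix2 e1 e2 (a_dist t) (b_dist t)) 1 ((IZR e1 + IZR e2) / 2)
    (second_moment (mix2 e1 e2 (a_dist t) (b_dist t))).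
Proof.
  intros [Ha Hb].
  exact (moments_second_moment _ _ _ _ (moments_mix2_centered e1 e2 _ _ _ _ _ Ha Hb)).
Qed.

Lemma b_dist_one_moments :
  moments (a_dist 1) 1 (1 / 2) (second_moment (a_dist 1)) ->
  moments (b_dist 1) 1 (- (1 / 2)) (second_moment (b_dist 1)).
Proof.
  intros Ha. destruct b_dist_one_has_moments as (n0 & n1 & n2 & Hb).
  pose proof (moments_mix2 0 (-1) _ _ _ _ _ _ _ _ Ha Hb) as Hfix. rewrite <- b_dist_one in Hfix.
  destruct (moments_unique _ _ _ _ _ _ _ Hb Hfix) as (E0 & E1 & _).
  assert (Hn0 : n0 = 1) by lra.
  assert (Hn1 : n1 = - (1 / 2)) by (rewrite Hn0 in E1; cbn [IZR IPR] in E1; lra).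
  subst n0 n1. exact (moments_second_moment _ _ _ _ Hb).
Qed.

Lemma all_dist_moments t : dist_moments t.
Proof.
  induction t as [t IH] using (well_founded_induction lt_wf).
  unfold dist_moments, parity_mean.
  destruct (Nat.Even_or_Odd t) as [[[|s] ->]|[s ->]].
  - change (2 * 0)%nat with 0%nat. change (oddZ 0) with 0%Z.
    rewrite a_dist_zero, b_dist_zero.
    replace (- (IZR 0 / 2)) with 0 by (cbn; field). replace (IZR 0 / 2) with 0 by (cbn; field).
    split; exact (moments_second_moment _ _ _ _ moments_dirac0).
  - rewrite a_dist_even, b_dist_even, oddZ_double. split.
    + replace (IZR 0 / 2) with ((IZR 0 + IZR 0) / 2) by (cbn; field).
      apply moments_mix2_dist, IH. lia.
    + replace (- (IZR 0 / 2)) with ((IZR (oddZ (S s)) + IZR (- oddZ (S s))) / 2)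
        by (rewrite opp_IZR; cbn; field).
      apply moments_mix2_dist, IH. lia.
  - rewrite oddZ_double_succ.
    assert (Ha : moments (a_dist (2 * s + 1)) 1 (IZR 1 / 2) (second_moment (a_dist (2 * s + 1)))).
    { rewrite a_dist_odd. replace (IZR 1 / 2) with ((IZR (oddZ s) + IZR (1 - oddZ s)) / 2)
        by (rewrite minus_IZR; field).
      apply moments_mix2_dist, IH. lia. }
    split; [exact Ha|].
    destruct s as [|s]; [now apply b_dist_one_moments|].
    rewrite b_dist_odd. replace (- (IZR 1 / 2)) with ((IZR 0 + IZR (-1)) / 2) by (cbn; field).
    apply moments_mix2_dist, IH. lia.
Qed.

Definition avg_second_moment (t : nat) : R :=
  (second_moment (a_dist t) + second_moment (b_dist t)) / 2.

Lemma second_moment_mix2_dist e1 e2 t :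
  second_moment (mix2 e1 e2 (a_dist t) (b_dist t))
  = avg_second_moment t + (IZR e1 - IZR e2) * parity_mean t + (IZR e1 ^ 2 + IZR e2 ^ 2) / 2.
Proof.
  destruct (all_dist_moments t) as [Ha Hb].
  exact (is_sumZ_unique _ _ (proj2 (proj2 (moments_mix2_centered e1 e2 _ _ _ _ _ Ha Hb)))).
Qed.

Lemma second_moment_a_even s : second_moment (a_dist (2 * s)) = avg_second_moment s.
Proof. rewrite a_dist_even, second_moment_mix2_dist. field. Qed.

Lemma second_moment_b_even s :
  second_moment (b_dist (2 * s)) = avg_second_moment s + 2 * IZR (oddZ s).
Proof.
  rewrite b_dist_even, second_moment_mix2_dist, opp_IZR. unfold parity_mean.
  destruct (oddZ_cases s) as [-> | ->]; cbn [IZR IPR]; field.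
Qed.

Lemma second_moment_a_odd s :
  second_moment (a_dist (2 * s + 1)) = avg_second_moment s + (1 + IZR (oddZ s)) / 2.
Proof.
  rewrite a_dist_odd, second_moment_mix2_dist, minus_IZR. unfold parity_mean.
  destruct (oddZ_cases s) as [-> | ->]; cbn [IZR IPR]; field.
Qed.

Lemma second_moment_b_odd s :
  second_moment (b_dist (2 * s + 1)) = avg_second_moment (s + 1) + (2 - IZR (oddZ s)) / 2.
Proof.
  rewrite b_dist_odd, second_moment_mix2_dist. unfold parity_mean. rewrite oddZ_succ, minus_IZR.
  destruct (oddZ_cases s) as [-> | ->]; cbn [IZR IPR]; field.
Qed.

Lemma avg_second_moment_even s : avg_second_moment (2 * s) = avg_second_moment s + IZR (oddZ s).
Proof.
  unfold avg_second_moment at 1. rewrite second_moment_a_even, second_moment_b_even. field.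
Qed.

Lemma avg_second_moment_odd s :
  avg_second_moment (2 * s + 1) = (avg_second_moment s + avg_second_moment (s + 1)) / 2 + 3 / 4.
Proof.
  unfold avg_second_moment at 1. rewrite second_moment_a_odd, second_moment_b_odd. field.
Qed.

Lemma avg_second_moment_step s :
  - (3 / 2) <= avg_second_moment (s + 1) - avg_second_moment s <= 3 / 2.
Proof.
  induction s as [s IH] using (well_founded_induction lt_wf).
  destruct (Nat.Even_or_Odd s) as [[u ->]|[u ->]].
  - rewrite avg_second_moment_odd, avg_second_moment_even.
    destruct u as [|u].
    + pose proof (avg_second_moment_odd 0) as H. cbn [Nat.mul Nat.add] in *.
      change (IZR (oddZ 0)) with 0. lra.
    + specialize (IH (S u) ltac:(lia)).
      destruct (oddZ_cases (S u)) as [-> | ->]; cbn [IZR IPR]; lra.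
  - replace (2 * u + 1 + 1)%nat with (2 * (u + 1))%nat by lia.
    rewrite avg_second_moment_even, avg_second_moment_odd.
    specialize (IH u ltac:(lia)). destruct (oddZ_cases (u + 1)) as [-> | ->]; cbn [IZR IPR]; lra.
Qed.

Lemma variance_gap t :
  v_alpha t - v_beta t = second_moment (a_dist t) - second_moment (b_dist t).
Proof.
  destruct (all_dist_moments t) as [Ha Hb]. unfold v_alpha, v_beta.
  rewrite (varZ_moments _ _ _ Ha), (varZ_moments _ _ _ Hb). ring.
Qed.

Theorem lemma3p6 : forall t : nat, Rabs (v_alpha t - v_beta t) <= 48.
Proof.
  intros t. rewrite variance_gap. apply Rabs_le.
  destruct (Nat.Even_or_Odd t) as [[s ->]|[s ->]].
  - rewrite second_moment_a_even, second_moment_b_even.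
    destruct (oddZ_cases s) as [-> | ->]; cbn [IZR IPR]; lra.
  - rewrite second_moment_a_odd, second_moment_b_odd.
    pose proof (avg_second_moment_step s).
    destruct (oddZ_cases s) as [-> | ->]; cbn [IZR IPR]; lra.
Qed.
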